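(* Let $H=L^2(\mathbb{R}_+)\subset\tilde H=L^2(\mathbb{R})$, $(S_t)$ the shift semigroup on $H$, $(\tilde S_t)$ the shift group on $\tilde H$, and let $(V_t=W_tS_t,\ t\ge0)$ be a cocyclic perturbation of $(S_t)$ by a cocycle $(W_t,\ t\ge 0)$, where each $W_t$ is regarded as a unitary operator on $\tilde H$ acting as the identity on functions supported in $\mathbb{R}_-$. Define unitary operators on $\tilde H$ by $W_{-t}=\tilde S_{-t}W_t^*\tilde S_t$ for $t\ge0$, and set $\tilde V_t=W_t\tilde S_t$ for $t\in\mathbb{R}$. Then $(\tilde V_t,\ t\in\mathbb{R})$ is a group of unitary operators on $\tilde H$, and $\tilde V_tf=V_tf$ whenever $\operatorname{supp}f\subset\mathbb{R}_+$ and $t\ge0$, while $\tilde V_tf=\tilde S_tf$ whenever $\operatorname{supp}f\subset\mathbb{R}_-$ and $t\le 0$.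
   Context: $(S_tf)(x)=f(x-t)$ for $x>t$, $0$ for $0\le x\le t$; $(\tilde S_tg)(x)=g(x-t)$. A cocycle of $(S_t)$ is a strongly continuous family $(W_t,\ t\ge 0)$ of unitary operators on $H$ with $W_{t+s}=W_t\tilde S_tW_s\tilde S_{-t}$ for $t,s\ge0$ and $W_0=I$; $V_t=W_tS_t$ is the cocyclic perturbation. *)

From mathcomp Require Import all_boot all_algebra.
From mathcomp Require Import all_classical all_reals all_analysis.
From mathcomp Require Import complex.
Import GRing.Theory Num.Theory.
Set Implicit Arguments. Unset Strict Implicit. Unset Printing Implicit Defensive.
Local Open Scope ring_scope.

(* L^2(R) (complex-valued, Lebesgue measure) is encoded "setoid-style":
   vectors are functions R -> R[i] satisfying L2, equality in L^2 is a.e.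
   equality [aeeq], operators are maps on functions, only relevant on L2. *)

Section Defs.
Variable R : realType.

Definition fn := R -> R[i].
Definition op := fn -> fn.

Definition leb : set (measurableTypeR R) -> \bar R := @lebesgue_measure R.

Definition meas_fn (f : fn) : Prop :=
  measurable_fun setT (fun x => complex.Re (f x)) /\
  measurable_fun setT (fun x => complex.Im (f x)).

Definition abs2 (z : R[i]) : R := complex.Re z ^+ 2 + complex.Im z ^+ 2.

Definition sqnorm (f : fn) : \bar R := (\int[leb]_x (abs2 (f x))%:E)%E.

Definition L2 (f : fn) : Prop := meas_fn f /\ (sqnorm f < +oo)%E.

Definition aeeq (f g : fn) : Prop := {ae leb, forall x, f x = g x}.

Definition supp_pos (f : fn) : Prop := {ae leb, forall x, x < 0 -> f x = 0}.
Definition supp_neg (f : fn) : Prop := {ae leb, forall x, 0 < x -> f x = 0}.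

Definition inH (f : fn) : Prop := L2 f /\ supp_pos f.

Definition inner (f g : fn) : R[i] :=
  let h := fun x => f x * (g x)^* in
  Complex (Rintegral leb setT (fun x => complex.Re (h x)))
          (Rintegral leb setT (fun x => complex.Im (h x))).

Definition unitary_on (P : fn -> Prop) (T : op) : Prop :=
  [/\ (forall f, P f -> P (T f)),
      (forall f g, P f -> P g -> aeeq f g -> aeeq (T f) (T g)),
      (forall (a : R[i]) f g, P f -> P g ->
         aeeq (T (fun x => a * f x + g x)) (fun x => a * T f x + T g x)),
      (forall f g, P f -> P g -> inner (T f) (T g) = inner f g)
    & (forall g, P g -> exists f, P f /\ aeeq (T f) g)].

Definition is_adjoint (T Ts : op) : Prop :=
  (forall g, L2 g -> L2 (Ts g)) /\
  (forall f g, L2 f -> L2 g -> inner (T f) g = inner f (Ts g)).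

Definition shiftG (t : R) : op := fun g x => g (x - t).

Definition shiftS (t : R) : op := fun f x => if t < x then f (x - t) else 0.

Definition cocycle (W : R -> op) : Prop :=
  [/\ (forall t, 0 <= t -> unitary_on L2 (W t) /\ unitary_on inH (W t)),
      (forall t f, 0 <= t -> L2 f -> supp_neg f -> aeeq (W t f) f),
      (forall f, inH f -> aeeq (W 0 f) f),
      (forall t s f, 0 <= t -> 0 <= s -> inH f ->
         aeeq (W (t + s) f) (W t (shiftG t (W s (shiftG (- t) f)))))
    & (forall f, inH f -> forall t0 : R, 0 <= t0 -> forall e : R, 0 < e ->
         exists d : R, 0 < d /\ forall t : R, 0 <= t -> `|t - t0| < d ->
           (sqnorm (fun x => (W t f x - W t0 f x)%R) < e%:E)%E)].

Definition Vpert (W : R -> op) (t : R) : op := fun f => W t (shiftS t f).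

(* W_u for all real u, given Ws t = W_t^*:  W_{-t} = ~S_{-t} W_t^* ~S_t *)
Definition Wfull (W Ws : R -> op) (u : R) : op :=
  if 0 <= u then W u else fun f => shiftG u (Ws (- u) (shiftG (- u) f)).

Definition Vtilde (W Ws : R -> op) (u : R) : op :=
  fun f => Wfull W Ws u (shiftG u f).

End Defs.

From mathcomp Require Import all_boot all_algebra.
From mathcomp Require Import all_classical all_reals all_analysis.
From mathcomp Require Import complex.
From mathcomp Require Import ring lra measurable_realfun.
Set Implicit Arguments. Unset Strict Implicit. Unset Printing Implicit Defensive.
Import order.Order.TTheory GRing.Theory Num.Theory.
Local Open Scope ring_scope.
Local Open Scope classical_set_scope.

(* For t >= 0 put V_t = W_t S~_t. The cocycle identity says exactly that
   (V_t) is a semigroup, and V_t is unitary; since W_{-t} S~_{-t} = S~_{-t} W_t^*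
   = V_t^{-1}, the operators ~V_u are the semigroup extended by inverses, and
   a semigroup of invertible maps extended by inverses is a group. The only
   analytic input is that W_0 = I and the cocycle identity, assumed on
   H = L^2(R_+), extend to ~H: both sides are linear and agree on L^2(R_-). *)

Section GroupFromInvertibleSemigroup.
Variables (R : realFieldType) (T : Type) (P : T -> Prop) (e : T -> T -> Prop).
Hypothesis e_sym : forall {x y}, e x y -> e y x.
Hypothesis e_trans : forall {x y z}, e x y -> e y z -> e x z.
Variable V : R -> T -> T.
Hypothesis VP : forall t {x}, P x -> P (V t x).
Hypothesis V_compat : forall t {x y}, P x -> P y -> e x y -> e (V t x) (V t y).
Hypothesis V_add : forall {t s x}, 0 <= t -> 0 <= s -> P x ->
  e (V (t + s) x) (V t (V s x)).
Hypothesis VNK : forall {t x}, 0 <= t -> P x -> e (V (- t) (V t x)) x.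
Hypothesis VKN : forall {t x}, 0 <= t -> P x -> e (V t (V (- t) x)) x.

Lemma V_inj_ge0 t x y : 0 <= t -> P x -> P y -> e (V t x) (V t y) -> e x y.
Proof.
move=> t0 Px Py exy; apply: (e_trans _ (VNK t0 Py)).
by apply: (e_trans (e_sym (VNK t0 Px))); apply: V_compat => //; apply: VP.
Qed.

Lemma VNK_le0 {t x} : t <= 0 -> P x -> e (V (- t) (V t x)) x.
Proof. by move=> t0; rewrite -{2}[t]opprK; apply: VKN; rewrite oppr_ge0. Qed.

Lemma V_addl_ge0 t w x : 0 <= t -> P x -> e (V (t + w) x) (V t (V w x)).
Proof.
move=> t0 Px; have Pw := VP w Px.
case: (leP 0 w) => hw; first exact: V_add.
case: (leP 0 (t + w)) => htw.
- apply: e_sym; rewrite {1}(_ : t = (t + w) + - w); last by rewrite addrK.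
  apply: (e_trans (V_add htw _ Pw)); first lra.
  by apply: V_compat => //; [do !apply: VP|apply: VNK_le0 => //; lra].
- apply: (@V_inj_ge0 (- (t + w))); [lra|exact: VP|by do !apply: VP|].
  apply: (e_trans (VNK_le0 _ Px)); first lra.
  apply: e_sym; apply: (e_trans (e_sym (V_add _ t0 Pw))); first lra.
  by rewrite (_ : - (t + w) + t = - w); [apply: VNK_le0 => //; lra|ring].
Qed.

Lemma V_addr_ge0 u s x : 0 <= s -> P x -> e (V (u + s) x) (V u (V s x)).
Proof.
move=> s0 Px; case: (leP 0 u) => hu; first exact: V_add.
apply: (@V_inj_ge0 (- u)); [lra|exact: VP|by do !apply: VP|].
apply: (e_trans (e_sym (V_addl_ge0 (u + s) (t := - u) _ Px))); first lra.
rewrite (_ : - u + (u + s) = s); last ring.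
by apply: e_sym; apply: VNK_le0 => //; [lra|apply: VP].
Qed.

Lemma group_of_invertible_semigroup u v x : P x -> e (V (u + v) x) (V u (V v x)).
Proof.
move=> Px; case: (leP 0 v) => hv; first exact: V_addr_ge0.
have Pv := VP v Px.
have -> : V u (V v x) = V ((u + v) + - v) (V v x) by rewrite addrK.
apply: (e_trans _ (e_sym (V_addr_ge0 (u + v) (s := - v) _ Pv))); last lra.
by apply: V_compat => //; [do !apply: VP|apply: e_sym (VNK_le0 _ Px); lra].
Qed.

End GroupFromInvertibleSemigroup.

Section TranslationInvariance.
Variable R : realType.
Notation mu := (@lebesgue_measure R).

Lemma measurable_subr (t : R) : measurable_fun [set: R] (fun x : R => x - t).
Proof. by apply: measurable_funD; [exact: measurable_id|exact: measurable_cst]. Qed.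

Lemma lebesgue_measure_translate (t : R) (A : set R) : measurable A ->
  pushforward mu ((fun x => x - t) : _ -> measurableTypeR R) A = mu A.
Proof.
move=> mA; apply/esym/lebesgue_measure_unique => //; first exact: measurable_subr.
move=> ? _ [[a b]] _ <-.
change (mu `]a, b] = mu ((fun x : R => x - t) @^-1` `]a, b])).
have -> : (fun x : R => x - t) @^-1` `]a, b] = `](a + t), (b + t)]%classic.
  apply/seteqP; split => x /=; rewrite !in_itv /=.
  - by move=> /andP[h1 h2]; rewrite -ltrBrDr h1 /= -lerBlDr.
  - by move=> /andP[h1 h2]; rewrite ltrBrDr h1 /= lerBlDr.
rewrite !lebesgue_measure_itv /= !lte_fin ltrD2r.
by case: ifP => // _; rewrite -!EFinB; congr (_%:E); ring.
Qed.

Lemma ae_translate (t : R) (Q : R -> Prop) :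
  {ae mu, forall x, Q x} -> {ae mu, forall x, Q (x - t)}.
Proof.
move=> [N [mN N0 QN]]; exists ((fun x => x - t) @^-1` N); split.
- by rewrite -[X in measurable X]setTI; apply: measurable_subr.
- by rewrite -[RHS]N0 -(lebesgue_measure_translate t mN).
- by move=> x /= nQ; apply: QN.
Qed.

Lemma ge0_integral_translate (t : R) (G : R -> \bar R) :
  measurable_fun [set: R] G -> (forall x, (0 <= G x)%E) ->
  (\int[mu]_x G (x - t)%R = \int[mu]_x G x)%E.
Proof.
move=> mG G0.
have := @ge0_integral_pushforward _ _ (measurableTypeR R) (measurableTypeR R) R
  _ (measurable_subr t) mu setT G measurableT mG (fun y _ => G0 y).
rewrite preimage_setT => <-.
apply: eq_measure_integral; first exact: measurable_subr.
by move=> ? A mA _; exact: lebesgue_measure_translate.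
Qed.

Lemma integral_translate (t : R) (G : R -> \bar R) :
  measurable_fun [set: R] G -> (\int[mu]_x G (x - t)%R = \int[mu]_x G x)%E.
Proof.
move=> mG; rewrite (_ : (fun x => G (x - t)%R) = G \o (fun x => x - t)) //.
rewrite integralE [RHS]integralE funepos_comp funeneg_comp.
rewrite -(ge0_integral_translate t (measurable_funepos mG)); last exact: funepos_ge0.
by rewrite -(ge0_integral_translate t (measurable_funeneg mG)); last exact: funeneg_ge0.
Qed.

End TranslationInvariance.

Section L2Space.
Variable R : realType.
Notation mu := (@lebesgue_measure R).
Implicit Types (f g h : fn R) (z w : R[i]).

#[local] Instance leb_ae_filter : Filter (nbhs (almost_everywhere (@leb R))) :=
  @ae_filter_ringOfSetsType _ _ R mu.

Lemma abs2_ge0 z : 0 <= abs2 z.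
Proof. by rewrite /abs2 addr_ge0 // sqr_ge0. Qed.

Lemma abs2_eq0 z : abs2 z = 0 -> z = 0.
Proof.
case: z => p q; rewrite /abs2 /= => E.
have /eqP : p ^+ 2 = 0 by apply/eqP; rewrite eq_le sqr_ge0 andbT; nra.
have /eqP : q ^+ 2 = 0 by apply/eqP; rewrite eq_le sqr_ge0 andbT; nra.
by rewrite !expf_eq0 /= => /eqP -> /eqP ->.
Qed.

Lemma abs2_scale_add_le (a z w : R[i]) :
  abs2 (a * z + w) <= 2 * abs2 a * abs2 z + 2 * abs2 w.
Proof.
case: a => c d; case: z => p q; case: w => u v; rewrite /abs2 /=.
have E : (c * p - d * q) ^+ 2 + (c * q + d * p) ^+ 2 =
  (c ^+ 2 + d ^+ 2) * (p ^+ 2 + q ^+ 2) by ring.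
have := sqr_ge0 (c * p - d * q - u); have := sqr_ge0 (c * q + d * p - v); nra.
Qed.

Lemma Re_mul_conj z w :
  complex.Re (z * w^*) = complex.Re z * complex.Re w + complex.Im z * complex.Im w.
Proof. by case: z => p q; case: w => r s /=; ring. Qed.

Lemma Im_mul_conj z w :
  complex.Im (z * w^*) = complex.Im z * complex.Re w - complex.Re z * complex.Im w.
Proof. by case: z => p q; case: w => r s /=; ring. Qed.

Lemma normr_Re_mul_conj_le z w : `|complex.Re (z * w^*)| <= abs2 z + abs2 w.
Proof.
rewrite Re_mul_conj /abs2; case: z => p q; case: w => r s /=.
have := sqr_ge0 (p - r); have := sqr_ge0 (q - s).
have := sqr_ge0 (p + r); have := sqr_ge0 (q + s).
by rewrite ler_norml; move=> *; apply/andP; split; nra.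
Qed.

Lemma normr_Im_mul_conj_le z w : `|complex.Im (z * w^*)| <= abs2 z + abs2 w.
Proof.
rewrite Im_mul_conj /abs2; case: z => p q; case: w => r s /=.
have := sqr_ge0 (q - r); have := sqr_ge0 (p - s).
have := sqr_ge0 (q + r); have := sqr_ge0 (p + s).
by rewrite ler_norml; move=> *; apply/andP; split; nra.
Qed.

Lemma measurable_abs2 f : meas_fn f -> measurable_fun [set: R] (fun x => abs2 (f x)).
Proof. by move=> [mRe mIm]; apply: measurable_funD; apply: measurable_funX. Qed.

Lemma measurable_Re_mul_conj f g : meas_fn f -> meas_fn g ->
  measurable_fun [set: R] (fun x => complex.Re (f x * (g x)^*)).
Proof.
move=> [mRf mIf] [mRg mIg]; under eq_fun do rewrite Re_mul_conj.
by apply: measurable_funD; apply: measurable_funM.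
Qed.

Lemma measurable_Im_mul_conj f g : meas_fn f -> meas_fn g ->
  measurable_fun [set: R] (fun x => complex.Im (f x * (g x)^*)).
Proof.
move=> [mRf mIf] [mRg mIg]; under eq_fun do rewrite Im_mul_conj.
by apply: measurable_funB; apply: measurable_funM.
Qed.

Lemma meas_fn_scale_add (a : R[i]) f g : meas_fn f -> meas_fn g ->
  meas_fn (fun x => a * f x + g x).
Proof.
case: a => c d [mRf mIf] [mRg mIg]; split.
- have -> : (fun x => complex.Re (Complex c d * f x + g x)) =
    (fun x => c * complex.Re (f x) - d * complex.Im (f x) + complex.Re (g x)).
    by apply/funext => x; case: (f x); case: (g x).
  by apply: measurable_funD => //; apply: measurable_funB; apply: measurable_funM.
- have -> : (fun x => complex.Im (Complex c d * f x + g x)) =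
    (fun x => c * complex.Im (f x) + d * complex.Re (f x) + complex.Im (g x)).
    by apply/funext => x; case: (f x); case: (g x).
  by apply: measurable_funD => //; apply: measurable_funD; apply: measurable_funM.
Qed.
Lemma meas_fn_shiftG t f : meas_fn f -> meas_fn (shiftG t f).
Proof.
move=> [mRf mIf]; split.
  exact: (measurableT_comp mRf (measurable_subr t)).
- exact: (measurableT_comp mIf (measurable_subr t)).
Qed.

Lemma L2E f :
  L2 f <-> meas_fn f /\ mu.-integrable setT (fun x => (abs2 (f x))%:E).
Proof.
have abs_abs2 : (\int[mu]_x `|(abs2 (f x))%:E| = \int[mu]_x (abs2 (f x))%:E)%E.
  by apply: eq_integral => x _; rewrite gee0_abs // lee_fin abs2_ge0.
split=> [[mf fin]|[mf /integrableP[_ fin]]].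
- split=> //; apply/integrableP; split; last by rewrite abs_abs2.
  by apply/measurable_EFinP; exact: measurable_abs2.
- by split=> //; rewrite /sqnorm -abs_abs2.
Qed.

Lemma L2_scale_add (a : R[i]) f g : L2 f -> L2 g -> L2 (fun x => a * f x + g x).
Proof.
move=> /L2E[mf If] /L2E[mg Ig]; apply/L2E; split; first exact: meas_fn_scale_add.
apply: (le_integrable measurableT _ _
  (integrableD measurableT (integrableZl measurableT (2 * abs2 a) If)
                           (integrableZl measurableT 2 Ig))).
- by apply/measurable_EFinP; apply: measurable_abs2; exact: meas_fn_scale_add.
- move=> x _ /=; rewrite lee_fin (ger0_norm (abs2_ge0 _)) ger0_norm.
    exact: abs2_scale_add_le.
  by rewrite addr_ge0 // ?mulr_ge0 // abs2_ge0.
Qed.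

Lemma L2_shiftG t f : L2 f -> L2 (shiftG t f).
Proof.
move=> [mf fin]; split; first exact: meas_fn_shiftG.
rewrite /sqnorm /shiftG (ge0_integral_translate t (G := fun x => (abs2 (f x))%:E)) //.
- by apply/measurable_EFinP; exact: measurable_abs2.
- by move=> x; rewrite lee_fin abs2_ge0.
Qed.

Definition restrict (i : interval R) f : fn R :=
  fun x => if x \in i then f x else 0.

Lemma L2_restrict i f : L2 f -> L2 (restrict i f).
Proof.
have if_indic x (b : R) : (if x \in i then b else 0) = \1_[set` i] x * b.
  rewrite indicE; case: ifP => xi; first by rewrite mem_set // mul1r.
  by rewrite memNset ?mul0r //= xi.
move=> /L2E[[mRf mIf] If]; apply/L2E.
have mr : meas_fn (restrict i f).
  split; [under eq_fun => x do rewrite /restrict fun_if /= if_indic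
         |under eq_fun => x do rewrite /restrict fun_if /= if_indic];
  by apply: measurable_funM => //; exact: measurable_indic.
split=> //; apply: (le_integrable measurableT _ _ If).
- by apply/measurable_EFinP; exact: measurable_abs2.
- move=> x _ /=; rewrite lee_fin !ger0_norm ?abs2_ge0 // /restrict.
  by case: ifP => // _; rewrite /abs2 /= expr0n /= addr0 abs2_ge0.
Qed.

Lemma L2_decomp f :
  f = (fun x => 1 * restrict `[0, +oo[%R f x + restrict `]-oo, 0[%R f x).
Proof.
apply/funext => x; rewrite /restrict !in_itv /= andbT mul1r.
by case: leP => _; rewrite ?addr0 ?add0r.
Qed.

Lemma aeeq_refl f : aeeq f f.
Proof. exact: nearW. Qed.

Lemma aeeq_sym f g : aeeq f g -> aeeq g f.
Proof. by apply: filterS => x ->. Qed.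

Lemma aeeq_trans f g h : aeeq f g -> aeeq g h -> aeeq f h.
Proof. by apply: filterS2 => x -> ->. Qed.

Lemma aeeq_scale_add (a : R[i]) f f' g g' : aeeq f f' -> aeeq g g' ->
  aeeq (fun x => a * f x + g x) (fun x => a * f' x + g' x).
Proof. by apply: filterS2 => x -> ->. Qed.

Lemma aeeq_shiftG t f g : aeeq f g -> aeeq (shiftG t f) (shiftG t g).
Proof. exact: ae_translate. Qed.

Lemma shiftGD s t f : shiftG s (shiftG t f) = shiftG (s + t) f.
Proof. by apply/funext => x; rewrite /shiftG opprD addrA. Qed.

Lemma shiftG0 f : shiftG 0 f = f.
Proof. by apply/funext => x; rewrite /shiftG subr0. Qed.

Lemma shiftGNK t f : shiftG (- t) (shiftG t f) = f.
Proof. by rewrite shiftGD addNr shiftG0. Qed.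

Lemma shiftGKN t f : shiftG t (shiftG (- t) f) = f.
Proof. by rewrite shiftGD subrr shiftG0. Qed.

Lemma supp_pos_restrict f : supp_pos (restrict `[0, +oo[%R f).
Proof. by apply: nearW => x x0; rewrite /restrict in_itv /= andbT leNgt x0. Qed.

Lemma supp_neg_restrict f : supp_neg (restrict `]-oo, 0[%R f).
Proof. by apply: nearW => x x0; rewrite /restrict in_itv /= ltNge ltW. Qed.

Lemma supp_neg_shiftGN t f : 0 <= t -> supp_neg f -> supp_neg (shiftG (- t) f).
Proof.
move=> t0 /(ae_translate (- t)); apply: filterS => x fx x0.
by apply: fx; rewrite opprK; lra.
Qed.

(* At x = t, S_t f is 0 while S~_t f is f 0; that point is null. *)
Lemma aeeq_shiftG_shiftS t f : supp_pos f -> aeeq (shiftG t f) (shiftS t f).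
Proof.
move=> /(ae_translate t) fpos.
have neq_t : {ae mu, forall x, x != t}.
  exists [set t]; split => //; first exact: lebesgue_measure_set1.
  by move=> x /= /negP; rewrite negbK => /eqP ->.
apply: filterS2 neq_t fpos => x xt fx; rewrite /shiftS /shiftG.
by case: ltP => // xlt; apply: fx; move: xt; rewrite neq_lt => /orP[]; lra.
Qed.

Lemma L2_shiftS t f : L2 f -> L2 (shiftS t f).
Proof.
move=> Lf; rewrite (_ : shiftS t f = restrict `]t, +oo[%R (shiftG t f)).
  by apply: L2_restrict; exact: L2_shiftG.
by apply/funext => x; rewrite /shiftS /restrict in_itv /= andbT.
Qed.

Lemma integrable_Re_mul_conj f g : L2 f -> L2 g ->
  mu.-integrable setT (fun x => (complex.Re (f x * (g x)^*))%:E).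
Proof.
move=> /L2E[mf If] /L2E[mg Ig].
apply: (le_integrable measurableT _ _ (integrableD measurableT If Ig)).
- by apply/measurable_EFinP; exact: measurable_Re_mul_conj.
- move=> x _ /=; rewrite lee_fin (ger0_norm (addr_ge0 (abs2_ge0 _) (abs2_ge0 _))).
  exact: normr_Re_mul_conj_le.
Qed.

Lemma integrable_Im_mul_conj f g : L2 f -> L2 g ->
  mu.-integrable setT (fun x => (complex.Im (f x * (g x)^*))%:E).
Proof.
move=> /L2E[mf If] /L2E[mg Ig].
apply: (le_integrable measurableT _ _ (integrableD measurableT If Ig)).
- by apply/measurable_EFinP; exact: measurable_Im_mul_conj.
- move=> x _ /=; rewrite lee_fin (ger0_norm (addr_ge0 (abs2_ge0 _) (abs2_ge0 _))).
  exact: normr_Im_mul_conj_le.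
Qed.

Lemma inner_aeeq f f' g g' : L2 f -> L2 f' -> L2 g -> L2 g' ->
  aeeq f f' -> aeeq g g' -> inner f g = inner f' g'.
Proof.
move=> [mf _] [mf' _] [mg _] [mg' _] ef eg.
have efg : {ae mu, forall x, f x * (g x)^* = f' x * (g' x)^*}.
  by apply: filterS2 ef eg => x -> ->.
rewrite /inner /Rintegral; congr Complex; congr fine; apply: ae_eq_integral => //.
- by apply/measurable_EFinP; exact: measurable_Re_mul_conj.
- by apply/measurable_EFinP; exact: measurable_Re_mul_conj.
- by apply: filterS efg => x ->.
- by apply/measurable_EFinP; exact: measurable_Im_mul_conj.
- by apply/measurable_EFinP; exact: measurable_Im_mul_conj.
- by apply: filterS efg => x ->.
Qed.

Lemma inner_shiftG t f g : L2 f -> L2 g -> inner (shiftG t f) (shiftG t g) = inner f g.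
Proof.
move=> [mf _] [mg _]; rewrite /inner /Rintegral /shiftG; congr Complex; congr fine.
- apply: (integral_translate t (G := fun x => (complex.Re (f x * (g x)^*))%:E)).
  by apply/measurable_EFinP; exact: measurable_Re_mul_conj.
- apply: (integral_translate t (G := fun x => (complex.Im (f x * (g x)^*))%:E)).
  by apply/measurable_EFinP; exact: measurable_Im_mul_conj.
Qed.

Lemma inner_subr h a b : L2 h -> L2 a -> L2 b ->
  inner h (fun x => a x - b x) = inner h a - inner h b.
Proof.
move=> Lh La Lb; rewrite /inner.
have -> : (fun x => complex.Re (h x * (a x - b x)^*)) =
    (fun x => complex.Re (h x * (a x)^*) - complex.Re (h x * (b x)^*)).
  by apply/funext => x; rewrite !Re_mul_conj /=; ring.
have -> : (fun x => complex.Im (h x * (a x - b x)^*)) =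
    (fun x => complex.Im (h x * (a x)^*) - complex.Im (h x * (b x)^*)).
  by apply/funext => x; rewrite !Im_mul_conj /=; ring.
rewrite (RintegralB measurableT (integrable_Re_mul_conj Lh La)
                                (integrable_Re_mul_conj Lh Lb)).
by rewrite (RintegralB measurableT (integrable_Im_mul_conj Lh La)
                                   (integrable_Im_mul_conj Lh Lb)).
Qed.

Lemma inner_self_eq0 h : L2 h -> inner h h = 0 -> aeeq h (fun _ => 0).
Proof.
move=> [mh fin] /(congr1 (@complex.Re R)) /=.
have -> : (fun x => complex.Re (h x * (h x)^*)) = (fun x => abs2 (h x)).
  by apply/funext => x; rewrite Re_mul_conj /abs2 !expr2.
rewrite /Rintegral => E0.
have I0 : (\int[mu]_x (abs2 (h x))%:E = 0)%E.
  have ge0 : (0 <= \int[mu]_x (abs2 (h x))%:E)%E.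
    by apply: integral_ge0 => x _; rewrite lee_fin abs2_ge0.
  by rewrite -(@fineK _ (\int[mu]_x _)%E) ?E0 // ge0_fin_numE.
have mh2 : measurable_fun [set: R] (fun x => (abs2 (h x))%:E).
  by apply/measurable_EFinP; exact: measurable_abs2.
have := (ae_eq_integral_abs mu measurableT mh2).1.
under eq_integral do rewrite gee0_abs ?lee_fin ?abs2_ge0 //.
move=> /(_ I0); apply: filterS => x /(_ Logic.I) /eqP.
by rewrite eqe => /eqP; exact: abs2_eq0.
Qed.

Lemma aeeq_inner a b : L2 a -> L2 b -> (forall f, L2 f -> inner f a = inner f b) ->
  aeeq a b.
Proof.
move=> La Lb Hab.
have Lab : L2 (fun x => a x - b x).
  rewrite (_ : (fun x => _) = (fun x => -1 * b x + a x)); last first.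
    by apply/funext => x; rewrite mulN1r addrC.
  exact: L2_scale_add.
have /inner_self_eq0 : inner (fun x => a x - b x) (fun x => a x - b x) = 0.
  by rewrite inner_subr // Hab ?subrr.
by move=> /(_ Lab); apply: filterS => x /eqP; rewrite subr_eq0 => /eqP.
Qed.

Lemma unitary_id : unitary_on (@L2 R) id.
Proof.
split=> // [a f g _ _|g Lg]; first exact: aeeq_refl.
by exists g; split; last exact: aeeq_refl.
Qed.

Lemma unitary_comp (A B : op R) : unitary_on (@L2 R) A -> unitary_on (@L2 R) B ->
  unitary_on (@L2 R) (fun f => A (B f)).
Proof.
move=> [AL2 Ae Alin Ainner Aonto] [BL2 Be Blin Binner Bonto]; split.
- by move=> f Lf; apply/AL2/BL2.
- by move=> f g Lf Lg efg; apply: Ae; [exact: BL2|exact: BL2|exact: Be].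
- move=> a f g Lf Lg; apply: aeeq_trans (Alin a _ _ (BL2 _ Lf) (BL2 _ Lg)).
  by apply: Ae; [apply/BL2/L2_scale_add|apply: L2_scale_add; exact: BL2|exact: Blin].
- by move=> f g Lf Lg; rewrite Ainner ?Binner //; exact: BL2.
- move=> g Lg; have [f1 [Lf1 e1]] := Aonto g Lg; have [f0 [Lf0 e0]] := Bonto f1 Lf1.
  by exists f0; split => //; apply: aeeq_trans e1; apply: Ae => //; exact: BL2.
Qed.

Lemma unitary_shiftG t : unitary_on (@L2 R) (shiftG t).
Proof.
split=> [f|f g _ _|a f g _ _|f g|g Lg]; first exact: L2_shiftG.
- exact: aeeq_shiftG.
- exact: aeeq_refl.
- exact: inner_shiftG.
- exists (shiftG (- t) g); split; first exact: L2_shiftG.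
  by rewrite shiftGKN; exact: aeeq_refl.
Qed.

Lemma unitary_eq_from_halves (A B : op R) :
  unitary_on (@L2 R) A -> unitary_on (@L2 R) B ->
  (forall f, inH f -> aeeq (A f) (B f)) ->
  (forall f, L2 f -> supp_neg f -> aeeq (A f) (B f)) ->
  forall f, L2 f -> aeeq (A f) (B f).
Proof.
move=> [_ _ Alin _ _] [_ _ Blin _ _] eqH eqneg f Lf.
have Lp : L2 (restrict `[0, +oo[%R f) by exact: L2_restrict.
have Ln : L2 (restrict `]-oo, 0[%R f) by exact: L2_restrict.
rewrite (L2_decomp f); apply: aeeq_trans (Alin 1 _ _ Lp Ln) _.
apply: aeeq_trans (aeeq_sym (Blin 1 _ _ Lp Ln)); apply: aeeq_scale_add.
- by apply: eqH; split => //; exact: supp_pos_restrict.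
- by apply: eqneg => //; exact: supp_neg_restrict.
Qed.

Section Cocycle.
Variables W Ws : R -> op R.
Hypothesis W_cocycle : cocycle W.
Hypothesis W_adjoint : forall t, 0 <= t -> is_adjoint (W t) (Ws t).

Lemma W_unitary t : 0 <= t -> unitary_on (@L2 R) (W t).
Proof. by move=> t0; have [/(_ t t0)[]] := W_cocycle. Qed.

Lemma L2_W t f : 0 <= t -> L2 f -> L2 (W t f).
Proof. by move=> /W_unitary[+ _ _ _ _]; apply. Qed.

Lemma W_aeeq t f g : 0 <= t -> L2 f -> L2 g -> aeeq f g -> aeeq (W t f) (W t g).
Proof. by move=> /W_unitary[_ + _ _ _]; apply. Qed.

Lemma W_supp_neg t f : 0 <= t -> L2 f -> supp_neg f -> aeeq (W t f) f.
Proof. by have [_ + _ _ _] := W_cocycle; apply. Qed.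

Lemma L2_Ws t f : 0 <= t -> L2 f -> L2 (Ws t f).
Proof. by move=> /W_adjoint[+ _]; apply. Qed.

Lemma inner_W_Ws t f g : 0 <= t -> L2 f -> L2 g -> inner (W t f) g = inner f (Ws t g).
Proof. by move=> /W_adjoint[_]; apply. Qed.

Lemma Ws_aeeq t f g : 0 <= t -> L2 f -> L2 g -> aeeq f g -> aeeq (Ws t f) (Ws t g).
Proof.
move=> t0 Lf Lg efg; apply: aeeq_inner; [exact: L2_Ws|exact: L2_Ws|].
move=> h Lh; rewrite -!inner_W_Ws //.
by apply: inner_aeeq => //; [exact: L2_W|exact: L2_W|exact: aeeq_refl].
Qed.

Lemma Ws_W t f : 0 <= t -> L2 f -> aeeq (Ws t (W t f)) f.
Proof.
move=> t0 Lf; apply: aeeq_inner => //; first by apply/L2_Ws/L2_W.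
move=> h Lh; rewrite -inner_W_Ws //; last exact: L2_W.
by have [_ _ _ + _] := W_unitary t0; apply.
Qed.

Lemma W_Ws t f : 0 <= t -> L2 f -> aeeq (W t (Ws t f)) f.
Proof.
move=> t0 Lf; have [_ _ _ _ /(_ f Lf)[g [Lg eWg]]] := W_unitary t0.
apply: (aeeq_trans _ eWg); apply: W_aeeq => //; first exact: L2_Ws.
apply: (aeeq_trans _ (Ws_W t0 Lg)); apply: Ws_aeeq => //; first exact: L2_W.
exact: aeeq_sym.
Qed.

Lemma Ws_unitary t : 0 <= t -> unitary_on (@L2 R) (Ws t).
Proof.
move=> t0; have [_ _ Wlin _ _] := W_unitary t0; split.
- by move=> f; exact: L2_Ws.
- by move=> f g; exact: Ws_aeeq.
- move=> a f g Lf Lg.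
  have Lu : L2 (fun x => a * Ws t f x + Ws t g x) by apply: L2_scale_add; exact: L2_Ws.
  apply: aeeq_trans (Ws_W t0 Lu); apply: Ws_aeeq => //;
    [exact: L2_scale_add|exact: L2_W|].
  apply: aeeq_sym; apply: aeeq_trans (Wlin _ _ _ (L2_Ws t0 Lf) (L2_Ws t0 Lg)) _.
  by apply: aeeq_scale_add; exact: W_Ws.
- move=> f g Lf Lg; rewrite -inner_W_Ws //; last exact: L2_Ws.
  by apply: inner_aeeq => //; [apply/L2_W/L2_Ws|exact: W_Ws|exact: aeeq_refl].
- by move=> g Lg; exists (W t g); split; [exact: L2_W|exact: Ws_W].
Qed.

Lemma Ws_supp_neg t f : 0 <= t -> L2 f -> supp_neg f -> aeeq (Ws t f) f.
Proof.
move=> t0 Lf fneg; apply: aeeq_trans (Ws_W t0 Lf).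
by apply: Ws_aeeq => //; [exact: L2_W|exact: aeeq_sym (W_supp_neg t0 Lf fneg)].
Qed.

Lemma W0_L2 f : L2 f -> aeeq (W 0 f) f.
Proof.
move: f; apply: (unitary_eq_from_halves (W_unitary (lexx 0)) unitary_id).
- by have [_ _ + _ _] := W_cocycle.
- by move=> g; exact: W_supp_neg.
Qed.

Lemma W_cocycle_L2 t s f : 0 <= t -> 0 <= s -> L2 f ->
  aeeq (W (t + s) f) (W t (shiftG t (W s (shiftG (- t) f)))).
Proof.
move=> t0 s0; have ts0 : 0 <= t + s by lra.
move: f; apply: (unitary_eq_from_halves (W_unitary ts0)
  (unitary_comp (W_unitary t0) (unitary_comp (unitary_shiftG t)
    (unitary_comp (W_unitary s0) (unitary_shiftG (- t)))))).
- by move=> g Hg; have [_ _ _ + _] := W_cocycle; apply.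
- move=> g Lg gneg; apply: (aeeq_trans (W_supp_neg ts0 Lg gneg)).
  have Lgt : L2 (shiftG (- t) g) by exact: L2_shiftG.
  have := aeeq_shiftG t (W_supp_neg s0 Lgt (supp_neg_shiftGN t0 gneg)).
  rewrite shiftGKN => eWs; apply: aeeq_sym.
  apply: (aeeq_trans _ (W_supp_neg t0 Lg gneg)).
  by apply: W_aeeq => //; apply/L2_shiftG/L2_W.
Qed.

Notation V := (Vtilde W Ws).

Lemma Vtilde_ge0 u : 0 <= u -> V u = fun f => W u (shiftG u f).
Proof. by move=> u0; rewrite /Vtilde /Wfull u0. Qed.

Lemma Vtilde_lt0 u : u < 0 -> V u = fun f => shiftG u (Ws (- u) f).
Proof.
by move=> u0; apply/funext => f; rewrite /Vtilde /Wfull leNgt u0 /= shiftGNK.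
Qed.

Lemma Vtilde_unitary u : unitary_on (@L2 R) (V u).
Proof.
case: (leP 0 u) => u0.
- by rewrite Vtilde_ge0 //; apply: unitary_comp (W_unitary u0) (unitary_shiftG u).
- rewrite Vtilde_lt0 //; apply: unitary_comp (unitary_shiftG u) (Ws_unitary _).
  by rewrite oppr_ge0 ltW.
Qed.

Lemma L2_Vtilde u f : L2 f -> L2 (V u f).
Proof. by case: (Vtilde_unitary u) => + _ _ _ _; apply. Qed.

Lemma Vtilde0 f : L2 f -> aeeq (V 0 f) f.
Proof. by rewrite Vtilde_ge0 // shiftG0; exact: W0_L2. Qed.

Lemma Vtilde_add_ge0 t s f : 0 <= t -> 0 <= s -> L2 f ->
  aeeq (V (t + s) f) (V t (V s f)).
Proof.
move=> t0 s0 Lf; rewrite !Vtilde_ge0 ?addr_ge0 //.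
apply: (aeeq_trans (W_cocycle_L2 t0 s0 (L2_shiftG _ Lf))).
by rewrite shiftGD addKr; exact: aeeq_refl.
Qed.

Lemma Vtilde_NK t f : 0 <= t -> L2 f -> aeeq (V (- t) (V t f)) f.
Proof.
move=> t0 Lf; have [->|t_neq0] := eqVneq t 0.
  by rewrite oppr0; exact: aeeq_trans (Vtilde0 (L2_Vtilde 0 Lf)) (Vtilde0 Lf).
have Nt_lt0 : - t < 0 by rewrite oppr_lt0 lt0r t_neq0.
rewrite (Vtilde_lt0 Nt_lt0) (Vtilde_ge0 t0) opprK.
apply: (aeeq_trans (aeeq_shiftG _ (Ws_W t0 (L2_shiftG t Lf)))).
by rewrite shiftGNK; exact: aeeq_refl.
Qed.

Lemma Vtilde_KN t f : 0 <= t -> L2 f -> aeeq (V t (V (- t) f)) f.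
Proof.
move=> t0 Lf; have [->|t_neq0] := eqVneq t 0.
  by rewrite oppr0; exact: aeeq_trans (Vtilde0 (L2_Vtilde 0 Lf)) (Vtilde0 Lf).
have Nt_lt0 : - t < 0 by rewrite oppr_lt0 lt0r t_neq0.
by rewrite (Vtilde_lt0 Nt_lt0) (Vtilde_ge0 t0) opprK shiftGKN; exact: W_Ws.
Qed.

Lemma Vtilde_group u v f : L2 f -> aeeq (V (u + v) f) (V u (V v f)).
Proof.
apply: (group_of_invertible_semigroup (P := @L2 R) (e := @aeeq R)).
- exact: aeeq_sym.
- exact: aeeq_trans.
- exact: L2_Vtilde.
- by move=> t f1 f2; case: (Vtilde_unitary t) => _ + _ _ _; apply.
- exact: Vtilde_add_ge0.
- exact: Vtilde_NK.
- exact: Vtilde_KN.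
Qed.

Lemma Vtilde_supp_pos t f : 0 <= t -> L2 f -> supp_pos f -> aeeq (V t f) (Vpert W t f).
Proof.
move=> t0 Lf fpos; rewrite Vtilde_ge0 //; apply: W_aeeq => //.
- exact: L2_shiftG.
- exact: L2_shiftS.
- exact: aeeq_shiftG_shiftS.
Qed.

Lemma Vtilde_supp_neg t f : t <= 0 -> L2 f -> supp_neg f -> aeeq (V t f) (shiftG t f).
Proof.
move=> t0 Lf fneg; case: (ltP t 0) => [t_lt0|t_ge0].
- rewrite Vtilde_lt0 //; apply: aeeq_shiftG.
  by apply: Ws_supp_neg; rewrite ?oppr_ge0 ?ltW.
- have -> : t = 0 by apply/eqP; rewrite eq_le t0.
  by rewrite Vtilde_ge0 // shiftG0; exact: W_supp_neg.
Qed.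
End Cocycle.
End L2Space.

Theorem proposition4 (R : realType) (W Ws : R -> op R) :
  cocycle W ->
  (forall t, 0 <= t -> is_adjoint (W t) (Ws t)) ->
  [/\ (forall u : R, unitary_on (@L2 R) (Vtilde W Ws u)),
      (forall f, L2 f -> aeeq (Vtilde W Ws 0 f) f),
      (forall (u v : R) f, L2 f ->
         aeeq (Vtilde W Ws (u + v) f) (Vtilde W Ws u (Vtilde W Ws v f))),
      (forall (t : R) f, 0 <= t -> L2 f -> supp_pos f ->
         aeeq (Vtilde W Ws t f) (Vpert W t f))
    & (forall (t : R) f, t <= 0 -> L2 f -> supp_neg f ->
         aeeq (Vtilde W Ws t f) (shiftG t f))].
Proof.
move=> W_cocycle W_adjoint; split.
- exact: Vtilde_unitary.
- exact: Vtilde0.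
- by move=> u v f; exact: Vtilde_group.
- by move=> t f; exact: Vtilde_supp_pos.
- by move=> t f; exact: Vtilde_supp_neg.
Qed.
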